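(* There is an absolute constant $c>0$ such that the following holds. Let $0<\alpha<1$, $\zeta>0$, and let $p(z)$ be a monic polynomial of degree $n$ with distinct roots $\lambda_1,\dots,\lambda_n$, all of modulus less than $\alpha$, and let $\Gamma=\Gamma(p)$. Then there exist an integer $d$ with $0\le d\le c\left(1+\max\left\{\frac{1}{1-\alpha}\log\frac{\Gamma}{(1-\alpha)\zeta},0\right\}\right)$ and a polynomial $h(z)$ of degree $d$ with leading coefficient $1$ such that for all $z\in\mathbb{C}$ with $|z|=1$, $$\left|\frac{z^{n+d}}{p(z)}-h(z)\right|\le\zeta.$$
   Context: For a polynomial $h$ of degree $n$ with distinct roots $\lambda_1,\dots,\lambda_n$ inside the unit circle, $\Gamma(h)=\sum_{j=1}^n\left|\frac{\lambda_j^n}{\prod_{i\ne j}(\lambda_i-\lambda_j)}\right|$. *)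

From HB Require Import structures.
From mathcomp Require Import all_boot all_order all_algebra.
From mathcomp Require Import complex.
From mathcomp Require Import reals exp Rstruct.
Set Implicit Arguments. Unset Strict Implicit. Unset Printing Implicit Defensive.
Import Order.TTheory GRing.Theory Num.Theory.
Local Open Scope ring_scope.
Local Open Scope complex_scope.

Notation RR := Rdefinitions.R.
Notation CC := (complex RR).

Definition Gamma (n : nat) (lam : 'I_n -> CC) : RR :=
  \sum_(j < n)
     complex.Re `| lam j ^+ n / \prod_(i < n | i != j) (lam i - lam j) |.

(* max{ (1/(1-alpha)) log (G/((1-alpha) zeta)), 0 }, with the convention
   log 0 = -oo (so the max is 0 when G = 0). *)
Definition dbound (alpha zeta G : RR) : RR :=
  if G == 0 then 0
  else Num.max ((1 - alpha)^-1 * ln (G / ((1 - alpha) * zeta))) 0.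

From HB Require Import structures.
From mathcomp Require Import all_boot all_order all_algebra.
From mathcomp Require Import complex.
From mathcomp Require Import reals exp Rstruct.
From mathcomp Require Import sequences.
From mathcomp Require Import ring zify.
Set Implicit Arguments. Unset Strict Implicit.
Import Order.TTheory GRing.Theory Num.Theory.
Local Open Scope ring_scope.
Local Open Scope complex_scope.

(* Take h = X^(n+d) div p and r = X^(n+d) mod p. Since r agrees with X^(n+d)
   at the roots of p and has degree < n, Lagrange interpolation gives the
   partial fraction expansion
     z^(n+d)/p(z) - h(z) = r(z)/p(z)
       = sum_j lam_j^(n+d) / (prod_(i<>j) (lam_j - lam_i) * (z - lam_j)).
   On the unit circle |z - lam_j| >= 1 - alpha and |lam_j|^d <= alpha^d, so
   the error is at most Gamma alpha^d / (1 - alpha), which is <= zeta as soon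
   as d >= log(Gamma / ((1-alpha) zeta)) / (1-alpha), because
   alpha^d <= exp(-(1-alpha) d). *)

Lemma lead_coef_divp_monic (F : fieldType) (p q : {poly F}) :
  q \is monic -> (size q <= size p)%N -> lead_coef (p %/ q) = lead_coef p.
Proof.
move=> q_monic sqp; rewrite -(lead_coef_Mmonic (p %/ q) q_monic).
have -> : p %/ q * q = p - p %% q by rewrite {2}(divp_eq p q) addrK.
rewrite lead_coefDl // size_polyN (leq_trans _ sqp) //.
by rewrite ltn_modpN0 ?monic_neq0.
Qed.

Lemma monic_divpXn (F : fieldType) (q : {poly F}) (m : nat) :
  q \is monic -> (size q <= m.+1)%N -> 'X^m %/ q \is monic.
Proof.
by move=> q_monic sq; apply/monicP; rewrite lead_coef_divp_monic ?lead_coefXn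
  ?size_polyXn.
Qed.

Lemma horner_divp_sub (F : fieldType) (p q : {poly F}) (z : F) : q.[z] != 0 ->
  p.[z] / q.[z] - (p %/ q).[z] = (p %% q).[z] / q.[z].
Proof.
by move=> qz0; rewrite {1}(divp_eq p q) hornerD hornerM mulrDl mulfK // addrC addKr.
Qed.

Section PartialFractions.

Variables (F : fieldType) (n : nat) (lam : 'I_n -> F).
Hypothesis lam_inj : injective lam.

Lemma size_prod_XsubC_ord : size (\prod_(i < n) ('X - (lam i)%:P)) = n.+1.
Proof. by rewrite size_prod_XsubC -[index_enum _]enumT size_enum_ord. Qed.

Lemma size_prod_XsubC_neq_leq (j : 'I_n) :
  (size (\prod_(i < n | i != j) ('X - (lam i)%:P))%R <= n)%N.
Proof.
rewrite -big_enum size_prod_XsubC -cardE cardC1 card_ord.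
by rewrite prednK // (leq_ltn_trans _ (ltn_ord j)).
Qed.

Lemma prod_sub_neq0 (j : 'I_n) : \prod_(i < n | i != j) (lam j - lam i) != 0.
Proof.
by apply/prodf_neq0 => i; rewrite subr_eq0 eq_sym (inj_eq lam_inj).
Qed.

Lemma lagrange_interpolation (r : {poly F}) : (size r <= n)%N ->
  r = \sum_(j < n) (r.[lam j] / \prod_(i < n | i != j) (lam j - lam i))
                     *: \prod_(i < n | i != j) ('X - (lam i)%:P).
Proof.
set L := \sum_(j < n) _ => sr; apply/eqP; rewrite -subr_eq0; apply/contraT => nz.
have L_lam k : L.[lam k] = r.[lam k].
  rewrite horner_sum (bigD1 k) //= [X in _ + X]big1 ?addr0 => [|j jk].
    by rewrite hornerZ horner_prod (eq_bigr _ (fun i _ => hornerXsubC _ _)) divfK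
      ?prod_sub_neq0.
  rewrite hornerZ horner_prod [X in _ * X](bigD1 k) 1?eq_sym //=.
  by rewrite hornerXsubC subrr mul0r mulr0.
have sL : (size L <= n)%N.
  by apply: leq_trans (size_sum _ _ _) _; apply/bigmax_leqP => j _;
    apply: leq_trans (size_scale_leq _ _) (size_prod_XsubC_neq_leq j).
have roots : all (root (r - L)) [seq lam i | i <- enum 'I_n].
  by apply/allP => _ /mapP [k _ ->]; rewrite rootE !hornerE L_lam subrr.
have srL : (size (r - L)%R <= n)%N.
  by rewrite (leq_trans (size_polyD _ _)) // size_polyN geq_max sr.
have := max_poly_roots nz roots.
by rewrite map_inj_uniq ?enum_uniq // size_map size_enum_ord ltnNge srL => /(_ isT).
Qed.

Lemma partial_fraction (r : {poly F}) (z : F) :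
  (size r <= n)%N -> (forall i, z != lam i) ->
  r.[z] / \prod_(i < n) (z - lam i) =
  \sum_(j < n) r.[lam j] / (\prod_(i < n | i != j) (lam j - lam i) * (z - lam j)).
Proof.
move=> sr z_lam; rewrite {1}(lagrange_interpolation sr) horner_sum mulr_suml.
apply: eq_bigr => j _; rewrite hornerZ horner_prod [\prod_(i < n) _](bigD1 j) //=.
rewrite (eq_bigr _ (fun i _ => hornerXsubC _ _)).
have Q0 : \prod_(i < n | i != j) (z - lam i) != 0.
  by apply/prodf_neq0 => i _; rewrite subr_eq0.
by rewrite (mulrC (z - lam j)) !invfM !mulrA mulfK.
Qed.

Lemma partial_fraction_divpXn (m : nat) (z : F) : (forall i, z != lam i) ->
  z ^+ m / (\prod_(i < n) ('X - (lam i)%:P)).[z]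
    - ('X^m %/ \prod_(i < n) ('X - (lam i)%:P)).[z] =
  \sum_(j < n) lam j ^+ m / (\prod_(i < n | i != j) (lam j - lam i) * (z - lam j)).
Proof.
move=> z_lam; set P := \prod_(i < n) _.
have P_z x : P.[x] = \prod_(i < n) (x - lam i).
  by rewrite horner_prod; apply: eq_bigr => i _; rewrite hornerXsubC.
have sr : (size ('X^m %% P)%R <= n)%N.
  by rewrite -ltnS -size_prod_XsubC_ord ltn_modpN0 ?monic_neq0 ?monic_prod_XsubC.
rewrite -[z ^+ m]hornerXn horner_divp_sub; last first.
  by rewrite P_z; apply/prodf_neq0 => i _; rewrite subr_eq0.
rewrite P_z partial_fraction //; apply: eq_bigr => j _.
by rewrite horner_mod ?hornerXn // rootE P_z (bigD1 j) //= subrr mul0r.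
Qed.

End PartialFractions.

Lemma expr_le_expR (R : realType) (a : R) (d : nat) :
  0 <= a -> a ^+ d <= expR (- ((1 - a) * d%:R)).
Proof.
move=> a0; rewrite mulrC -mulrN expRM_natl opprB.
apply: lerXn2r; rewrite ?nnegrE ?expR_ge0 //.
by have := expR_ge1Dx (a - 1); rewrite addrC subrK.
Qed.

Lemma exists_degree_dbound (alpha zeta G : RR) :
  0 < alpha -> alpha < 1 -> 0 < zeta -> 0 <= G ->
  exists d : nat, d%:R <= 1 + dbound alpha zeta G /\
                  G * alpha ^+ d / (1 - alpha) <= zeta.
Proof.
move=> a0 a1 z0 G0; have a1p : 0 < 1 - alpha by rewrite subr_gt0.
set m := dbound alpha zeta G.
have m0 : 0 <= m by rewrite /m /dbound; case: ifP => // _; rewrite le_max lexx orbT.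
have /andP [_ m_lt] := truncn_itv m0.
exists (Num.truncn m).+1; split; first by rewrite -natr1 addrC lerD2l (truncn_le m).
have [-> | G_neq0] := eqVneq G 0; first by rewrite !mul0r ltW.
have Gp : 0 < G by rewrite lt_def G_neq0.
set y := G / ((1 - alpha) * zeta).
have yp : 0 < y by rewrite divr_gt0 // mulr_gt0.
have ln_y : ln y <= (1 - alpha) * (Num.truncn m).+1%:R.
  rewrite -ler_pdivrMl //; apply: le_trans (ltW m_lt).
  by rewrite /m /dbound (negbTE G_neq0) le_max lexx.
have a_pow : alpha ^+ (Num.truncn m).+1 <= y^-1.
  apply: le_trans (expr_le_expR _ (ltW a0)) _.
  by rewrite -(lnK yp) -expRN ler_expR lerN2.
suff -> : zeta = G * y^-1 / (1 - alpha) by rewrite ler_pM2r ?invr_gt0 // ler_pM2l.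
by rewrite /y; field; rewrite G_neq0 !gt_eqF.
Qed.

Lemma dist_unit_circle_ge (R : numDomainType) (z l a : R) :
  `|z| = 1 -> `|l| <= a -> 1 - a <= `|z - l|.
Proof. by move=> z1 la; apply: le_trans (lerB_dist _ _); rewrite z1 lerB. Qed.

Lemma norm_partial_fraction_le (R : numFieldType) (n d : nat)
    (lam : 'I_n -> R) (D : 'I_n -> R) (z a b : R) :
  0 < b -> (forall i, `|lam i| <= a) -> (forall i, b <= `|z - lam i|) ->
  `|\sum_(j < n) lam j ^+ (n + d) / (D j * (z - lam j))|
    <= (\sum_(j < n) `|lam j ^+ n / D j|) * (a ^+ d / b).
Proof.
move=> b0 lam_le dist_ge; rewrite mulr_suml; apply: le_trans (ler_norm_sum _ _ _) _.
apply: ler_sum => j _; rewrite exprD invfM !normrM normfV normrX mulrACA.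
rewrite normfV normrX ler_wpM2l ?mulr_ge0 ?invr_ge0 ?exprn_ge0 //.
rewrite ler_pM ?exprn_ge0 ?invr_ge0 // ?lerXn2r ?nnegrE ?(le_trans _ (lam_le j)) //.
by rewrite lef_pV2 ?posrE // (lt_le_trans b0).
Qed.

Lemma GammaE (n : nat) (lam : 'I_n -> CC) :
  (Gamma lam)%:C = \sum_(j < n) `|lam j ^+ n / \prod_(i < n | i != j) (lam j - lam i)|.
Proof.
rewrite /Gamma rmorph_sum; apply: eq_bigr => j _.
rewrite [LHS]RRe_real ?normr_real // !normrM !normfV !normr_prod; congr (_ * (_)^-1).
by apply: eq_bigr => i _; rewrite distrC.
Qed.

Lemma Gamma_ge0 (n : nat) (lam : 'I_n -> CC) : 0 <= Gamma lam.
Proof. by rewrite -lecR GammaE sumr_ge0. Qed.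

Theorem lemma5p5 :
  exists c : RR, 0 < c /\
  forall (alpha zeta : RR) (n : nat) (lam : 'I_n -> CC) (p : {poly CC}),
    0 < alpha -> alpha < 1 -> 0 < zeta ->
    injective lam ->
    (forall i, `|lam i| < alpha%:C) ->
    p = \prod_(i < n) ('X - (lam i)%:P) ->
    exists (d : nat) (h : {poly CC}),
      d%:R <= c * (1 + dbound alpha zeta (Gamma lam)) /\
      size h = d.+1 /\ h \is monic /\
      (forall z : CC, `|z| = 1 ->
         `| z ^+ (n + d) / p.[z] - h.[z] | <= zeta%:C).
Proof.
exists 1; split => // alpha zeta n lam _ a0 a1 z0 lam_inj lam_lt ->.
have [d [d_le err_le]] := exists_degree_dbound a0 a1 z0 (Gamma_ge0 lam).
set P := \prod_(i < n) ('X - (lam i)%:P).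
have P_monic : P \is monic by apply: monic_prod_XsubC.
exists d, ('X^(n + d) %/ P); split; first by rewrite mul1r.
split.
  by rewrite size_divp ?monic_neq0 // size_polyXn size_prod_XsubC_ord; lia.
split; first by rewrite monic_divpXn // size_prod_XsubC_ord ltnS leq_addr.
move=> z z1; have b0 : 0 < (1 - alpha)%:C by rewrite ltcR subr_gt0.
have dist_ge i : (1 - alpha)%:C <= `|z - lam i|.
  by rewrite rmorphB rmorph1 dist_unit_circle_ge // ltW.
have z_neq i : z != lam i.
  by rewrite -subr_eq0 -normr_gt0 (lt_le_trans b0 (dist_ge i)).
rewrite partial_fraction_divpXn //.
apply: le_trans (norm_partial_fraction_le d (fun j => \prod_(i < n | i != j) (lam j - lam i))
  b0 (fun i => ltW (lam_lt i)) dist_ge) _.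
have -> : alpha%:C ^+ d / (1 - alpha)%:C = (alpha ^+ d / (1 - alpha))%:C.
  by rewrite rmorphM rmorphXn fmorphV.
by rewrite -GammaE -rmorphM lecR mulrA.
Qed.
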